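(* Let $s\in\mathbb R$, $p,q\in(0,+\infty]$ and $x_0\in\mathbb R^d$, and assume the wavelet system satisfies the dyadic covering property. Then there exists a sequence $\mathcal C\in b^{s,q}_p$ whose divergence exponent at $x_0$ satisfies $\delta_{\mathcal C}(x_0)=-s+\frac dp$.
   Context: Setting: integers $d,N\ge1$, bounded fast-decaying $\psi^{(1)},\dots,\psi^{(N)}:\mathbb R^d\to\mathbb C$, wavelets $\psi^{(i)}_{j,k}(x)=\psi^{(i)}(2^jx-k)$, $j\ge0$, $k\in\mathbb Z^d$; dyadic cubes $\lambda_{j,k}=\prod_{m=1}^d[k_m2^{-j},(k_m+1)2^{-j})$ of scale $j$; coefficients indexed by $(i,\lambda)$; $\Lambda_j$ = pairs $(i,\lambda)$ with $\lambda$ of scale $j$. $b^{s,q}_p$: sequences $(c^{(i)}_\lambda)$ with $\big(\big(\sum_{(i,\lambda)\in\Lambda_j}|c^{(i)}_\lambda2^{(s-d/p)j}|^p\big)^{1/p}\big)_{j\ge0}\in\ell^q$ (supremum if $p=\infty$; $d/p=0$ if $p=\infty$). Divergence exponent $\delta_{\mathcal C}(x)$: supremum of $\gamma$ such that there exist $C>0$ and $(i_n,j_n,k_n)$ with $j_n\to\infty$ and $|c^{(i_n)}_{j_n,k_n}\psi^{(i_n)}_{j_n,k_n}(x)|\ge C2^{\gamma j_n}$. Dyadic covering property: there exist $C_0>0$ and finitely many triplets $(i_l,j_l,k_l)$ with $j_l\ge1$ such that every $x\in[0,1)^d$ has some $l$ with $|\psi^{(i_l)}(2^{j_l}x-k_l)|\ge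 C_0$. *)

From Stdlib Require Import Reals Lra ZArith List.
Open Scope R_scope.

(* Complex numbers modelled as pairs (re, im); only modulus and products matter. *)
Definition Cx := (R * R)%type.
Definition Cnorm (z : Cx) : R := sqrt (fst z * fst z + snd z * snd z).

(* Points of R^d and Z^d are lists of length d. *)
Definition euclid_norm (x : list R) : R := sqrt (fold_right Rplus 0 (map (fun t => t * t) x)).

Inductive ext : Type := Fin (r : R) | PInf.
Definition valid_exp (p : ext) : Prop := match p with Fin r => 0 < r | PInf => True end.
Definition d_over (d : nat) (p : ext) : R := match p with Fin r => INR d / r | PInf => 0 end.

Definition rpow (x a : R) : R := if Rle_dec x 0 then 0 else Rpower x a.
Definition pow2 (g : R) : R := Rpower 2 g.

Fixpoint dil (j : nat) (k : list Z) (x : list R) : list R :=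
  match x, k with
  | xm :: x', km :: k' => (pow2 (INR j) * xm - IZR km) :: dil j k' x'
  | _, _ => nil
  end.

Definition wav (psi : nat -> list R -> Cx) (i j : nat) (k : list Z) (x : list R) : Cx :=
  psi i (dil j k x).

Definition wavelet_ok (d : nat) (f : list R -> Cx) : Prop :=
  (exists B, forall x, length x = d -> Cnorm (f x) <= B) /\
  (forall M : nat, exists Cst, forall x, length x = d ->
       Cnorm (f x) * (1 + euclid_norm x) ^ M <= Cst).

Definition dyadic_covering (d N : nat) (psi : nat -> list R -> Cx) : Prop :=
  exists C0, 0 < C0 /\
  exists L : list (nat * nat * list Z),
    (forall t, In t L -> let '(i, j, k) := t in (i < N)%nat /\ (1 <= j)%nat /\ length k = d) /\
    forall x, length x = d -> (forall m, (m < d)%nat -> 0 <= nth m x 0 < 1) ->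
      exists t, In t L /\ let '(i, j, k) := t in C0 <= Cnorm (psi i (dil j k x)).

(* coefficient families: c i j k = c^{(i)}_{j,k}, i < N, j >= 0, k in Z^d *)
Definition coeffs := nat -> nat -> list Z -> Cx.

Definition zrange (n : nat) : list Z :=
  map (fun t => (Z.of_nat t - Z.of_nat n)%Z) (seq 0 (2 * n + 1)).
Fixpoint box (d n : nat) : list (list Z) :=
  match d with
  | O => nil :: nil
  | S d' => flat_map (fun z => map (cons z) (box d' n)) (zrange n)
  end.

Definition sumR (l : list R) : R := fold_right Rplus 0 l.
Definition maxR (l : list R) : R := fold_right Rmax 0 l.

(* The true layer norm is the (increasing) limit as n -> infinity. *)
Definition layer (d N : nat) (s : R) (p : ext) (c : coeffs) (j n : nat) : R :=
  match p with
  | Fin r => pow2 ((s - INR d / r) * INR j) *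
      rpow (sumR (flat_map (fun i => map (fun k => rpow (Cnorm (c i j k)) r) (box d n)) (seq 0 N)))
           (1 / r)
  | PInf => pow2 (s * INR j) *
      maxR (flat_map (fun i => map (fun k => Cnorm (c i j k)) (box d n)) (seq 0 N))
  end.

(* membership in b^{s,q}_p: the sequence of layer norms is in l^q
   (sup over boxes commutes with finite sums of increasing sequences) *)
Definition in_besov (d N : nat) (s : R) (p q : ext) (c : coeffs) : Prop :=
  match q with
  | Fin r => exists M, forall (J n : nat),
      sumR (map (fun j => rpow (layer d N s p c j n) r) (seq 0 (S J))) <= M
  | PInf => exists M, forall (j n : nat), layer d N s p c j n <= M
  end.

(* the set of gamma in the definition of the divergence exponent at x *)
Definition div_set (d N : nat) (psi : nat -> list R -> Cx) (c : coeffs) (x : list R) (g : R) : Prop :=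
  exists Cst, 0 < Cst /\
  exists (I Jn : nat -> nat) (K : nat -> list Z),
    (forall n, (I n < N)%nat /\ length (K n) = d) /\
    (forall M : nat, exists n0 : nat, forall n, (n0 <= n)%nat -> (M <= Jn n)%nat) /\
    (forall n, Cst * pow2 (g * INR (Jn n)) <=
               Cnorm (c (I n) (Jn n) (K n)) * Cnorm (wav psi (I n) (Jn n) (K n) x)).

From Stdlib Require Import Reals List ZArith.
From Stdlib Require Import Lra Lia Classical IndefiniteDescription.
Open Scope R_scope.

(* At a sparse sequence of scales J_n = T n^2 + j_n put a single coefficient of
   modulus 2^((d/p - s) J_n) 2^(-n).  Its position is chosen by applying the dyadic
   covering property to the fractional part of 2^(T n^2) x0, so that the corresponding
   wavelet is at least C0 in modulus at x0.  Every layer norm is then at most 2^(-n),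
   hence the sequence lies in b^{s,q}_p for every q; and since n <= sqrt(J_n), the
   factor 2^(-n) is subexponential in J_n, so every exponent below d/p - s is attained.
   Conversely all coefficients are at most 2^((d/p - s) j) and the wavelets are
   bounded, so no larger exponent is. *)

Lemma sumR_app l1 l2 : sumR (l1 ++ l2) = sumR l1 + sumR l2.
Proof. induction l1; simpl; try rewrite IHl1; lra. Qed.

Lemma sumR_map_plus {A} (F G : A -> R) l :
  sumR (map (fun x => F x + G x) l) = sumR (map F l) + sumR (map G l).
Proof. induction l; simpl; try rewrite IHl; lra. Qed.

Lemma sumR_map_zero {A} (F : A -> R) l :
  (forall x, In x l -> F x = 0) -> sumR (map F l) = 0.
Proof. induction l; simpl; intros H; auto. rewrite H, IHl; auto; lra. Qed.

Lemma sumR_map_le {A} (F G : A -> R) l :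
  (forall x, In x l -> F x <= G x) -> sumR (map F l) <= sumR (map G l).
Proof.
  induction l; simpl; intros H; [lra|].
  pose proof (H a (or_introl eq_refl)). pose proof (IHl (fun x h => H x (or_intror h))). lra.
Qed.

Lemma sumR_map_nonneg {A} (F : A -> R) l :
  (forall x, In x l -> 0 <= F x) -> 0 <= sumR (map F l).
Proof.
  intros H. rewrite <- (sumR_map_zero (fun _ => 0) l) by auto. now apply sumR_map_le.
Qed.

Lemma sumR_map_ge_term {A} (F : A -> R) l x0 :
  In x0 l -> (forall x, In x l -> 0 <= F x) -> F x0 <= sumR (map F l).
Proof.
  induction l as [|a l IH]; simpl; intros Hin H; [tauto|].
  pose proof (sumR_map_nonneg F l (fun x h => H x (or_intror h))).
  pose proof (H a (or_introl eq_refl)).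
  destruct Hin as [->|Hin]; [lra|].
  pose proof (IH Hin (fun x h => H x (or_intror h))). lra.
Qed.

Lemma sumR_map_le_single {A} (F : A -> R) l x0 :
  NoDup l -> (forall x, x <> x0 -> F x = 0) -> 0 <= F x0 -> sumR (map F l) <= F x0.
Proof.
  induction l as [|a l IH]; intros Hl HF H0; simpl; [lra|].
  inversion Hl as [|? ? Ha Hl']; subst.
  destruct (classic (a = x0)) as [->|Hne].
  - rewrite sumR_map_zero; [lra|]. intros x Hx. apply HF. congruence.
  - rewrite HF by auto. specialize (IH Hl' HF H0). lra.
Qed.

Lemma sumR_flat_map {A B} (F : A -> B -> R) (la : list A) (lb : list B) :
  sumR (flat_map (fun a => map (F a) lb) la) = sumR (map (fun a => sumR (map (F a) lb)) la).
Proof. induction la; simpl; auto. rewrite sumR_app, IHla; auto. Qed.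

Lemma sumR_map_swap {A B} (F : A -> B -> R) (la : list A) (lb : list B) :
  sumR (map (fun a => sumR (map (F a) lb)) la) =
  sumR (map (fun b => sumR (map (fun a => F a b) la)) lb).
Proof.
  induction la; simpl.
  - rewrite sumR_map_zero; auto.
  - rewrite IHla, <- sumR_map_plus. reflexivity.
Qed.

Lemma sumR_geometric x M :
  0 <= x < 1 -> sumR (map (fun m => x ^ m) (seq 0 M)) <= 1 / (1 - x).
Proof.
  intros Hx.
  assert (E : sumR (map (fun m => x ^ m) (seq 0 M)) * (1 - x) = 1 - x ^ M).
  { induction M; [simpl; ring|].
    rewrite seq_S, map_app, sumR_app, Rmult_plus_distr_r, IHM. simpl. ring. }
  assert (0 <= x ^ M) by (apply pow_le; lra).
  apply Rmult_le_reg_r with (1 - x); [lra|].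
  rewrite E. field_simplify; lra.
Qed.

Lemma maxR_le l V : 0 <= V -> (forall x, In x l -> x <= V) -> maxR l <= V.
Proof. induction l; simpl; intros H0 H; auto. apply Rmax_lub; auto. Qed.

Lemma NoDup_flat_map {A B} (f : A -> list B) (l : list A) :
  NoDup l -> (forall a, In a l -> NoDup (f a)) ->
  (forall a b y, In a l -> In b l -> In y (f a) -> In y (f b) -> a = b) ->
  NoDup (flat_map f l).
Proof.
  induction l as [|a l IH]; intros Hl Hf Hd; simpl; [constructor|].
  inversion Hl; subst.
  apply NoDup_app.
  - apply Hf; simpl; auto.
  - apply IH; auto.
    + intros; apply Hf; simpl; auto.
    + intros a0 b y Ha Hb; apply Hd; simpl; auto.
  - intros y Hy Hy'. apply in_flat_map in Hy' as [b [Hb Hyb]].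
    assert (a = b) by (apply (Hd a b y); simpl; auto). subst. contradiction.
Qed.

Lemma NoDup_box d n : NoDup (box d n).
Proof.
  assert (Hz : NoDup (zrange n)).
  { apply NoDup_map_NoDup_ForallPairs; [|apply seq_NoDup]. intros x y _ _ H. lia. }
  induction d; simpl; [repeat constructor; simpl; tauto|].
  apply NoDup_flat_map; auto.
  - intros a _. apply NoDup_map_NoDup_ForallPairs; auto. now intros x y _ _ [= ->].
  - intros a b y _ _ H1 H2.
    apply in_map_iff in H1 as [x1 [<- _]]. apply in_map_iff in H2 as [x2 [[= ->] _]]. auto.
Qed.

Lemma pow2_pos g : 0 < pow2 g.
Proof. apply exp_pos. Qed.

Lemma pow2_plus a b : pow2 (a + b) = pow2 a * pow2 b.
Proof. apply Rpower_plus. Qed.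

Lemma pow2_le a b : a <= b -> pow2 a <= pow2 b.
Proof. intros; apply Rle_Rpower; lra. Qed.

Lemma pow2_0 : pow2 0 = 1.
Proof. apply Rpower_O; lra. Qed.

Lemma pow2_unbounded del A : 0 < del -> exists M : nat, A < pow2 (del * INR M).
Proof.
  intros Hdel.
  assert (Hln : 0 < ln 2) by (rewrite <- ln_1; apply ln_increasing; lra).
  destruct (INR_unbounded (A / (del * ln 2))) as [M HM]. exists M.
  assert (A < del * INR M * ln 2).
  { apply Rmult_lt_compat_r with (r := del * ln 2) in HM; [|nra].
    replace (A / (del * ln 2) * (del * ln 2)) with A in HM by (field; nra). nra. }
  pose proof (exp_ineq1_le (del * INR M * ln 2)). unfold pow2, Rpower. lra.
Qed.

Lemma rpow_nonneg x a : 0 <= rpow x a.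
Proof. unfold rpow. destruct Rle_dec; [lra|]. left; apply exp_pos. Qed.

Lemma rpow_le0 x a : x <= 0 -> rpow x a = 0.
Proof. unfold rpow. destruct Rle_dec; auto; lra. Qed.

Lemma rpow_le x y a : 0 <= a -> x <= y -> rpow x a <= rpow y a.
Proof.
  intros Ha Hxy. unfold rpow.
  destruct (Rle_dec x 0); [destruct Rle_dec; [lra|left; apply exp_pos]|].
  destruct Rle_dec; [lra|]. apply Rle_Rpower_l; lra.
Qed.

Lemma rpow_rpow_inv V r : 0 <= V -> 0 < r -> rpow (rpow V r) (1 / r) = V.
Proof.
  intros HV Hr. destruct (Rle_dec V 0).
  - rewrite (rpow_le0 V), rpow_le0; lra.
  - pose proof (exp_pos (r * ln V)).
    unfold rpow at 2. destruct Rle_dec; [lra|].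
    unfold rpow. destruct Rle_dec; [unfold Rpower in *; lra|].
    rewrite Rpower_mult. replace (r * (1 / r)) with 1 by (field; lra).
    apply Rpower_1; lra.
Qed.

Lemma rpow_pow2 g r : rpow (pow2 g) r = pow2 (g * r).
Proof.
  unfold rpow. destruct Rle_dec as [h|]; [pose proof (pow2_pos g); lra|].
  apply Rpower_mult.
Qed.

Lemma Cnorm_nonneg z : 0 <= Cnorm z.
Proof. apply sqrt_pos. Qed.

Lemma Cnorm_real x : 0 <= x -> Cnorm (x, 0) = x.
Proof.
  intros. unfold Cnorm; simpl. replace (x * x + 0 * 0) with (x * x) by ring.
  now apply sqrt_square.
Qed.

Lemma layer_le_single d N s p c j n i0 k0 V :
  valid_exp p -> 0 <= V ->
  (forall i k, i <> i0 \/ k <> k0 -> Cnorm (c i j k) = 0) -> Cnorm (c i0 j k0) <= V ->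
  layer d N s p c j n <= pow2 ((s - d_over d p) * INR j) * V.
Proof.
  intros Hp HV Hzero Hc0.
  assert (H2 := pow2_pos ((s - d_over d p) * INR j)).
  destruct p as [r|]; simpl in *.
  all: try replace (s - 0) with s in H2 |- * by ring.
  all: apply Rmult_le_compat_l; [lra|].
  - rewrite sumR_flat_map.
    assert (Hsum : sumR (map (fun i => sumR (map (fun k => rpow (Cnorm (c i j k)) r) (box d n)))
                             (seq 0 N)) <= rpow V r).
    { eapply Rle_trans; [apply (sumR_map_le_single _ _ i0); [apply seq_NoDup| |]|].
      - intros i Hi. apply sumR_map_zero. intros k _. rewrite Hzero by auto. apply rpow_le0; lra.
      - apply sumR_map_nonneg; intros; apply rpow_nonneg.
      - eapply Rle_trans; [apply (sumR_map_le_single _ _ k0); [apply NoDup_box| |]|].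
        + intros k Hk. rewrite Hzero by auto. apply rpow_le0; lra.
        + apply rpow_nonneg.
        + apply rpow_le; lra. }
    rewrite <- (rpow_rpow_inv V r) by lra.
    apply rpow_le; [left; apply Rdiv_lt_0_compat|]; lra.
  - apply maxR_le; auto. intros x Hx.
    apply in_flat_map in Hx as [i [_ Hx]]. apply in_map_iff in Hx as [k [<- _]].
    destruct (classic (i = i0 /\ k = k0)) as [[-> ->]|Hik]; auto.
    rewrite Hzero; [lra|tauto].
Qed.

(* [shift_index j m x k] is the translation index [k'] with
   [dil (m + j) k' x = dil j k (frac (2^m x))], coordinatewise
   [k'_l = 2^j * floor(2^m x_l) + k_l]. *)
Fixpoint shift_index (j m : nat) (x : list R) (k : list Z) : list Z :=
  match x, k with
  | t :: x', kl :: k' =>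
      (2 ^ Z.of_nat j * Int_part (pow2 (INR m) * t) + kl)%Z :: shift_index j m x' k'
  | _, _ => nil
  end.

Lemma dil_frac_part j m k x :
  dil j k (map (fun t => frac_part (pow2 (INR m) * t)) x) = dil (m + j) (shift_index j m x k) x.
Proof.
  revert k; induction x as [|t x IH]; intros [|kl k]; simpl; auto.
  f_equal; [|apply IH].
  unfold frac_part.
  rewrite plus_INR, pow2_plus, plus_IZR, mult_IZR, <- pow_IZR.
  replace (pow2 (INR j)) with (2 ^ j) by (unfold pow2; rewrite Rpower_pow; lra).
  ring.
Qed.

Lemma length_dil j k x : length k = length x -> length (dil j k x) = length x.
Proof. revert k; induction x; intros [|kl k]; simpl; intros; auto; discriminate. Qed.

Lemma length_shift_index j m x k : length k = length x -> length (shift_index j m x k) = length x.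
Proof. revert k; induction x; intros [|kl k]; simpl; intros; auto; discriminate. Qed.

Lemma dyadic_covering_at_scale d psi C0 (L : list (nat * nat * list Z)) x0 m :
  length x0 = d ->
  (forall x, length x = d -> (forall l, (l < d)%nat -> 0 <= nth l x 0 < 1) ->
      exists t, In t L /\ let '(i, j, k) := t in C0 <= Cnorm (psi i (dil j k x))) ->
  exists t, In t L /\ let '(i, j, k) := t in
    C0 <= Cnorm (psi i (dil (m + j) (shift_index j m x0 k) x0)).
Proof.
  intros Hx Hcov.
  destruct (Hcov (map (fun t => frac_part (pow2 (INR m) * t)) x0)) as [[[i j] k] [Hin Hk]].
  - rewrite length_map; auto.
  - intros l Hl.
    assert (Hy : In (nth l (map (fun t => frac_part (pow2 (INR m) * t)) x0) 0)
                    (map (fun t => frac_part (pow2 (INR m) * t)) x0))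
      by (apply nth_In; rewrite length_map; lia).
    apply in_map_iff in Hy as [t [<- _]].
    pose proof (base_fp (pow2 (INR m) * t)). lra.
  - exists (i, j, k). split; auto. now rewrite dil_frac_part in Hk.
Qed.

Definition strictly_increasing (J : nat -> nat) : Prop :=
  forall a b, (a < b)%nat -> (J a < J b)%nat.

Lemma strictly_increasing_ge_id J n : strictly_increasing J -> (n <= J n)%nat.
Proof.
  intros HJ. induction n; [lia|]. specialize (HJ n (S n) (Nat.lt_succ_diag_r n)). lia.
Qed.

(* Meant for strictly increasing [J]: then [n <= J n], so the search for [n] may stop at [j]. *)
Definition sparse {A : Type} (zero : A) (J : nat -> nat) (w : nat -> A) (j : nat) : A :=
  match find (fun n => Nat.eqb (J n) j) (seq 0 (S j)) with
  | Some n => w n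
  | None => zero
  end.

Lemma sparse_cases {A} (zero : A) J w j :
  sparse zero J w j = zero \/ exists n, J n = j /\ sparse zero J w j = w n.
Proof.
  unfold sparse. destruct find as [n|] eqn:E; auto.
  apply find_some in E as [_ E]. apply Nat.eqb_eq in E. eauto.
Qed.

Lemma sparse_at {A} (zero : A) J w n : strictly_increasing J -> sparse zero J w (J n) = w n.
Proof.
  intros HJ. pose proof (strictly_increasing_ge_id J n HJ).
  unfold sparse. destruct find as [m|] eqn:E.
  - apply find_some in E as [_ E]. apply Nat.eqb_eq in E.
    destruct (Nat.lt_trichotomy m n) as [h|[->|h]]; auto; apply HJ in h; lia.
  - pose proof (find_none _ _ E n) as h. cbv beta in h. rewrite Nat.eqb_refl in h.
    discriminate h. apply in_seq. lia.
Qed.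

Lemma sparse_map {A B} (f : A -> B) (zero : A) J w j :
  f (sparse zero J w j) = sparse (f zero) J (fun n => f (w n)) j.
Proof. unfold sparse. now destruct find. Qed.

Lemma sumR_sparse_le J w M :
  strictly_increasing J -> (forall n, 0 <= w n) ->
  sumR (map (sparse 0 J w) (seq 0 M)) <= sumR (map w (seq 0 M)).
Proof.
  intros HJ Hw.
  set (F := fun j n => if Nat.eqb (J n) j then w n else 0).
  assert (HF : forall j n, 0 <= F j n) by (intros; unfold F; destruct Nat.eqb; auto; lra).
  apply Rle_trans with (sumR (map (fun j => sumR (map (F j) (seq 0 M))) (seq 0 M))).
  - apply sumR_map_le. intros j Hj. apply in_seq in Hj.
    destruct (sparse_cases 0 J w j) as [->|[n [<- ->]]].
    + apply sumR_map_nonneg; auto.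
    + replace (w n) with (F (J n) n) by (unfold F; now rewrite Nat.eqb_refl).
      apply sumR_map_ge_term; auto.
      pose proof (strictly_increasing_ge_id J n HJ). apply in_seq. lia.
  - rewrite sumR_map_swap. apply sumR_map_le. intros n _.
    replace (w n) with (F (J n) n) by (unfold F; now rewrite Nat.eqb_refl).
    apply (sumR_map_le_single (fun j => F j n)); [apply seq_NoDup| |auto].
    intros j Hj. unfold F. destruct (Nat.eqb_spec (J n) j); congruence.
Qed.

Definition spike (J I : nat -> nat) (K : nat -> list Z) (v : nat -> R) : coeffs :=
  fun i j k => sparse (0, 0) J
    (fun n => if Nat.eq_dec i (I n) then
                if list_eq_dec Z.eq_dec k (K n) then (v n, 0) else (0, 0)
              else (0, 0)) j.

Section Spike.
Variables (J I : nat -> nat) (K : nat -> list Z) (v : nat -> R).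
Hypothesis v_nonneg : forall n, 0 <= v n.

Lemma spike_at n : strictly_increasing J -> spike J I K v (I n) (J n) (K n) = (v n, 0).
Proof.
  intros HJ. unfold spike. rewrite sparse_at by auto.
  destruct Nat.eq_dec; [destruct list_eq_dec|]; tauto.
Qed.

Lemma Cnorm_spike_le i j k : Cnorm (spike J I K v i j k) <= sparse 0 J v j.
Proof.
  unfold spike. rewrite sparse_map. unfold sparse. destruct find as [n|]; simpl.
  - destruct Nat.eq_dec; [destruct list_eq_dec|]; rewrite Cnorm_real; auto; lra.
  - rewrite Cnorm_real; lra.
Qed.

Lemma layer_spike_le d N s p j n :
  valid_exp p ->
  layer d N s p (spike J I K v) j n <=
  sparse 0 J (fun m => pow2 ((s - d_over d p) * INR (J m)) * v m) j.
Proof.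
  intros Hp.
  destruct (find (fun m => Nat.eqb (J m) j) (seq 0 (S j))) as [m|] eqn:E;
    unfold sparse; rewrite E.
  - pose proof (find_some _ _ E) as [_ HJm]. apply Nat.eqb_eq in HJm. subst j.
    apply layer_le_single with (i0 := I m) (k0 := K m); auto;
      unfold spike, sparse; rewrite E.
    + intros i k Hik.
      destruct Nat.eq_dec; [destruct list_eq_dec|]; try (apply Cnorm_real; lra); tauto.
    + destruct Nat.eq_dec; [destruct list_eq_dec|]; try tauto. rewrite Cnorm_real; auto; lra.
  - apply Rle_trans with (pow2 ((s - d_over d p) * INR j) * 0); [|lra].
    apply layer_le_single with (i0 := 0%nat) (k0 := nil); try lra; auto;
      unfold spike, sparse; rewrite E; intros; rewrite Cnorm_real; lra.
Qed.
End Spike.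

Lemma in_besov_spike d N s p q J I K :
  strictly_increasing J -> valid_exp p -> valid_exp q ->
  in_besov d N s p q (spike J I K (fun n => pow2 ((- s + d_over d p) * INR (J n) - INR n))).
Proof.
  intros HJ Hp Hq.
  assert (Hlayer : forall j n,
    layer d N s p (spike J I K (fun n => pow2 ((- s + d_over d p) * INR (J n) - INR n))) j n
    <= sparse 0 J (fun m => pow2 (- INR m)) j).
  { intros j n. eapply Rle_trans; [apply layer_spike_le; auto; intros; left; apply pow2_pos|].
    right. unfold sparse. destruct find; auto. rewrite <- pow2_plus. f_equal. ring. }
  destruct q as [r|]; simpl in Hq; unfold in_besov.
  - exists (1 / (1 - pow2 (- r))). intros Jmax n.
    apply Rle_trans with (sumR (map (sparse 0 J (fun m => pow2 (- r) ^ m)) (seq 0 (S Jmax)))).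
    + apply sumR_map_le. intros j _.
      eapply Rle_trans; [apply rpow_le; [lra|apply Hlayer]|].
      rewrite (sparse_map (fun x => rpow x r)), (rpow_le0 0 r) by lra.
      right. unfold sparse. destruct find as [m|]; auto.
      rewrite rpow_pow2. unfold pow2. rewrite <- Rpower_pow, Rpower_mult by apply exp_pos.
      f_equal. ring.
    + eapply Rle_trans; [apply sumR_sparse_le; auto; intros; apply pow_le; left; apply pow2_pos|].
      apply sumR_geometric. split; [left; apply pow2_pos|].
      rewrite <- pow2_0. apply Rpower_lt; lra.
  - exists 1. intros j n. eapply Rle_trans; [apply Hlayer|].
    destruct (sparse_cases 0 J (fun m => pow2 (- INR m)) j) as [->|[m [_ ->]]]; [lra|].
    rewrite <- pow2_0. apply pow2_le. pose proof (pos_INR m). lra.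
Qed.

Lemma Cnorm_spike_le_scale a J I K i j k :
  Cnorm (spike J I K (fun n => pow2 (a * INR (J n) - INR n)) i j k) <= pow2 (a * INR j).
Proof.
  eapply Rle_trans; [apply Cnorm_spike_le; intros; left; apply pow2_pos|].
  destruct (sparse_cases 0 J (fun n => pow2 (a * INR (J n) - INR n)) j) as [->|[n [<- ->]]].
  - left; apply pow2_pos.
  - apply pow2_le. pose proof (pos_INR n). lra.
Qed.

Lemma wavelets_uniformly_bounded d N psi :
  (forall i, (i < N)%nat -> wavelet_ok d (psi i)) ->
  exists B, 0 <= B /\ forall i x, (i < N)%nat -> length x = d -> Cnorm (psi i x) <= B.
Proof.
  induction N as [|N IH]; intros Hok.
  - exists 0. split; [lra|]. intros; lia.
  - destruct IH as [B [HB0 HB]]; [intros; apply Hok; lia|].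
    destruct (Hok N (Nat.lt_succ_diag_r N)) as [[B' HB'] _].
    exists (Rmax B B'). split; [eapply Rle_trans; [exact HB0|apply Rmax_l]|].
    intros i x Hi Hx. destruct (Nat.eq_dec i N) as [->|Hne].
    + eapply Rle_trans; [apply HB'; auto|apply Rmax_r].
    + eapply Rle_trans; [apply HB; auto; lia|apply Rmax_l].
Qed.

Lemma div_set_le d N psi c x a B g :
  (forall i j k, (i < N)%nat -> length k = d ->
     Cnorm (c i j k) * Cnorm (wav psi i j k x) <= B * pow2 (a * INR j)) ->
  div_set d N psi c x g -> g <= a.
Proof.
  intros Hbound [Cst [HCst [I [J [K [HIK [HJ Hlow]]]]]]].
  apply Rnot_lt_le. intros Hag.
  destruct (pow2_unbounded (g - a) (B / Cst)) as [M HM]; [lra|].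
  destruct (HJ M) as [n Hn]. specialize (Hn n (le_n _)).
  destruct (HIK n) as [Hi Hk].
  set (j := J n) in *.
  assert (Hgrow : pow2 ((g - a) * INR M) <= pow2 ((g - a) * INR j)).
  { apply pow2_le, Rmult_le_compat_l; [lra|]. now apply le_INR. }
  assert (Hup : Cst * pow2 ((g - a) * INR j) * pow2 (a * INR j) <= B * pow2 (a * INR j)).
  { rewrite Rmult_assoc, <- pow2_plus. replace ((g - a) * INR j + a * INR j) with (g * INR j) by ring.
    eapply Rle_trans; [apply Hlow|]. now apply Hbound. }
  apply Rmult_le_reg_r in Hup; [|apply pow2_pos].
  assert (B < Cst * pow2 ((g - a) * INR j)).
  { replace B with (Cst * (B / Cst)) by (field; lra). apply Rmult_lt_compat_l; lra. }
  lra.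
Qed.

Lemma div_set_ge d N psi c x a C0 (I J : nat -> nat) (K : nat -> list Z) g :
  0 < C0 -> g < a ->
  (forall n, (I n < N)%nat /\ length (K n) = d) ->
  (forall n, (n * n <= J n)%nat) ->
  (forall n, C0 * pow2 (a * INR (J n) - INR n) <=
             Cnorm (c (I n) (J n) (K n)) * Cnorm (wav psi (I n) (J n) (K n) x)) ->
  div_set d N psi c x g.
Proof.
  intros HC0 Hga HIK HJ Hlow.
  set (del := a - g).
  exists (C0 * pow2 (- / (4 * del))).
  split; [apply Rmult_lt_0_compat; auto using pow2_pos|].
  exists I, J, K. split; [|split]; auto.
  - intros M. exists M. intros n Hn. specialize (HJ n). nia.
  - intros n. eapply Rle_trans; [|apply Hlow].
    rewrite Rmult_assoc, <- pow2_plus.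
    apply Rmult_le_compat_l; [lra|]. apply pow2_le.
    (* AM-GM: [n <= del * n^2 + 1 / (4 del) <= del * J n + 1 / (4 del)]. *)
    assert (HJn : INR n * INR n <= INR (J n)) by (rewrite <- mult_INR; apply le_INR; auto).
    assert (E : del * INR n * INR n - INR n + / (4 * del) = / (4 * del) * (2 * del * INR n - 1) ^ 2)
      by (unfold del; field; lra).
    assert (0 <= / (4 * del) * (2 * del * INR n - 1) ^ 2).
    { apply Rmult_le_pos; [left; apply Rinv_0_lt_compat; unfold del; lra|apply pow2_ge_0]. }
    assert (del * (INR n * INR n) <= del * INR (J n)) by (apply Rmult_le_compat_l; unfold del; lra).
    replace g with (a - del) by (unfold del; ring). lra.
Qed.

Lemma is_lub_of_dense (X : R -> Prop) a :
  (forall g, X g -> g <= a) -> (forall g, g < a -> X g) -> is_lub X a.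
Proof.
  intros Hup Hdense. split; [exact Hup|].
  intros b Hb. apply Rnot_lt_le. intros Hba.
  assert (Hmid : (a + b) / 2 < a) by lra.
  specialize (Hb _ (Hdense _ Hmid)). lra.
Qed.

Lemma covering_scales_bounded (L : list (nat * nat * list Z)) :
  exists T, (1 <= T)%nat /\ forall i j k, In (i, j, k) L -> (j < T)%nat.
Proof.
  exists (S (list_max (map (fun t : nat * nat * list Z => snd (fst t)) L))). split; [lia|].
  intros i j k Hin.
  pose proof (proj1 (list_max_le (map (fun t : nat * nat * list Z => snd (fst t)) L) _) (le_n _))
    as Hmax.
  rewrite Forall_forall in Hmax.
  specialize (Hmax j (in_map (fun t : nat * nat * list Z => snd (fst t)) L (i, j, k) Hin)). lia.
Qed.

Lemma dyadic_covering_quadratic_scales d N psi x0 :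
  length x0 = d -> dyadic_covering d N psi ->
  exists C0 (I J : nat -> nat) (K : nat -> list Z),
    0 < C0 /\ strictly_increasing J /\ (forall n, (n * n <= J n)%nat) /\
    forall n, (I n < N)%nat /\ length (K n) = d /\ C0 <= Cnorm (wav psi (I n) (J n) (K n) x0).
Proof.
  intros Hx [C0 [HC0 [L [HL Hcov]]]].
  destruct (covering_scales_bounded L) as [T [HT1 HT]].
  destruct (functional_choice (fun n (t : nat * nat * list Z) => In t L /\
      let '(i, j, k) := t in
      C0 <= Cnorm (psi i (dil (T * n * n + j) (shift_index j (T * n * n) x0 k) x0))))
    as [t Ht].
  { intros n. now apply (dyadic_covering_at_scale d). }
  set (jn n := snd (fst (t n))).
  exists C0, (fun n => fst (fst (t n))), (fun n => T * n * n + jn n)%nat,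
    (fun n => shift_index (jn n) (T * n * n) x0 (snd (t n))).
  assert (Hjn : forall n, (jn n < T)%nat).
  { intros n. destruct (Ht n) as [Hin _]. unfold jn. destruct (t n) as [[i j] k]. eauto. }
  split; [exact HC0|split; [|split]].
  - intros m n Hmn. pose proof (Hjn m).
    assert (T * (m + 1) * (m + 1) <= T * n * n)%nat
      by (apply Nat.mul_le_mono; [apply Nat.mul_le_mono|]; lia).
    nia.
  - intros n. nia.
  - intros n. destruct (Ht n) as [Hin Hpsi]. pose proof (HL _ Hin) as HLn.
    unfold jn, wav. destruct (t n) as [[i j] k]. simpl in *.
    destruct HLn as [Hi [_ Hk]]. rewrite length_shift_index by lia. auto.
Qed.

Theorem mainTheorem15 (d N : nat) (psi : nat -> list R -> Cx) (s : R) (p q : ext)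
  (x0 : list R) :
  (1 <= d)%nat -> (1 <= N)%nat ->
  (forall i, (i < N)%nat -> wavelet_ok d (psi i)) ->
  valid_exp p -> valid_exp q -> length x0 = d ->
  dyadic_covering d N psi ->
  exists c : coeffs, in_besov d N s p q c /\
    is_lub (div_set d N psi c x0) (- s + d_over d p).
Proof.
  intros _ _ Hok Hp Hq Hx Hcov.
  destruct (dyadic_covering_quadratic_scales d N psi x0 Hx Hcov)
    as [C0 [I [J [K [HC0 [HJ [HJsq HIK]]]]]]].
  destruct (wavelets_uniformly_bounded d N psi Hok) as [B [HB0 HB]].
  exists (spike J I K (fun n => pow2 ((- s + d_over d p) * INR (J n) - INR n))).
  split; [now apply in_besov_spike|].
  apply is_lub_of_dense.
  - intros g. apply div_set_le with B. intros i j k Hi Hk.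
    rewrite Rmult_comm. apply Rmult_le_compat; auto using Cnorm_nonneg, Cnorm_spike_le_scale.
    apply HB; auto. rewrite length_dil; lia.
  - intros g Hg. apply div_set_ge with (- s + d_over d p) C0 I J K; auto.
    + intros n. destruct (HIK n) as [? [? _]]; auto.
    + intros n. rewrite spike_at, Cnorm_real by (auto; left; apply pow2_pos).
      rewrite Rmult_comm. apply Rmult_le_compat_l; [left; apply pow2_pos|apply HIK].
Qed.
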